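(* Let $G=(V,E)$ be a directed acyclic graph with real edge weights, let $s_1,t_1,s_2,t_2\in V$, let $E_\cap=E(s_1,t_1)\cap E(s_2,t_2)$, and let $\mathcal{B}$ be the set of vertex sets of the connected components of the undirected graph on vertex set $V$ obtained from $(V,E_\cap)$ by ignoring edge directions. If $(P_1,P_2)\in\Pi(s_1,t_1)\times\Pi(s_2,t_2)$ is a pair of paths with $V(P_1)\cap V(P_2)\neq\emptyset$, then there is $B\in\mathcal{B}$ with $V(P_1)\cap V(P_2)\subseteq B$.
   Context: $\Pi(x,y)$ is the set of shortest (minimum weight) paths from $x$ to $y$; $E(x,y)$ is the set of edges lying on at least one path in $\Pi(x,y)$; $V(P)$ is the vertex set of path $P$. *)

From Stdlib Require Import Relations.
From mathcomp Require Import all_boot all_order all_algebra.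
Set Implicit Arguments. Unset Strict Implicit. Unset Printing Implicit Defensive.
Import Order.TTheory GRing.Theory Num.Theory.
Local Open Scope ring_scope.

Definition is_path {V : finType} (e : rel V) (x y : V) (P : seq V) : Prop :=
  match P with
  | [::] => False
  | z :: q => [/\ z = x, path e z q & last z q = y]
  end.

Definition path_edges {V : finType} (P : seq V) : seq (V * V) := zip P (behead P).

Definition path_weight {R : numDomainType} {V : finType} (w : V -> V -> R)
  (P : seq V) : R := \sum_(uv <- path_edges P) w uv.1 uv.2.

Definition acyclic {V : finType} (e : rel V) : Prop :=
  forall (x : V) (q : seq V), path e x q -> x \notin q.

Definition shortest_path {R : realDomainType} {V : finType} (e : rel V)
  (w : V -> V -> R) (x y : V) (P : seq V) : Prop :=
  is_path e x y P /\
  forall Q, is_path e x y Q -> path_weight w P <= path_weight w Q.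

Definition on_shortest {R : realDomainType} {V : finType} (e : rel V)
  (w : V -> V -> R) (x y u v : V) : Prop :=
  exists P, shortest_path e w x y P /\ (u, v) \in path_edges P.

Definition Ecap_undir {R : realDomainType} {V : finType} (e : rel V)
  (w : V -> V -> R) (s1 t1 s2 t2 : V) (u v : V) : Prop :=
  (on_shortest e w s1 t1 u v /\ on_shortest e w s2 t2 u v) \/
  (on_shortest e w s1 t1 v u /\ on_shortest e w s2 t2 v u).

Definition is_component {R : realDomainType} {V : finType} (e : rel V)
  (w : V -> V -> R) (s1 t1 s2 t2 : V) (B : {set V}) : Prop :=
  exists v : V, forall u : V,
    u \in B <-> clos_refl_trans V (Ecap_undir e w s1 t1 s2 t2) v u.

From mathcomp Require Import all_boot all_order all_algebra.
From mathcomp Require Import boolp.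
From Stdlib Require Import Relations.
Set Implicit Arguments. Unset Strict Implicit. Unset Printing Implicit Defensive.
Import Order.TTheory GRing.Theory Num.Theory.
Local Open Scope ring_scope.

(* If x and y both lie on P1 and on P2, acyclicity forces them to occur in the
   same order on both paths.  Both x-y segments are then shortest x-y paths of
   equal weight, so exchanging them turns P2 into another shortest s2-t2 path
   containing the x-y segment of P1.  Every edge of that segment therefore lies
   in E(s1,t1) ∩ E(s2,t2), and x, y are joined in E_cap.  Hence all common
   vertices of P1 and P2 lie in one component. *)

Section PathSegments.
Variables (V : finType) (e : rel V).

Lemma path_edges_cat (A B : seq V) (x : V) :
  path_edges (A ++ x :: B) = path_edges (rcons A x) ++ path_edges (x :: B).
Proof.
elim: A => [|a A IH] //=.
by case: A IH => [|b A] IH //=; rewrite /path_edges /= in IH *; rewrite IH.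
Qed.

Lemma path_edges_segment (A M C : seq V) (x y : V) :
  path_edges (A ++ x :: M ++ y :: C) =
  path_edges (rcons A x) ++ path_edges (x :: rcons M y) ++ path_edges (y :: C).
Proof.
by rewrite path_edges_cat -[x :: M ++ y :: C]/((x :: M) ++ y :: C) path_edges_cat.
Qed.

Lemma path_weight_segment (R : numDomainType) (w : V -> V -> R)
    (A M C : seq V) (x y : V) :
  path_weight w (A ++ x :: M ++ y :: C) =
  path_weight w (rcons A x) + path_weight w (x :: rcons M y) +
  path_weight w (y :: C).
Proof. by rewrite /path_weight path_edges_segment catA !big_cat. Qed.

Lemma is_path_cat (s t x : V) (A B : seq V) :
  is_path e s t (A ++ x :: B) <->
  is_path e s x (rcons A x) /\ is_path e x t (x :: B).
Proof.
case: A => [|a A] /=.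
  by split=> [[-> p l]|[[-> _ _] [_ p l]]].
rewrite cat_path rcons_path last_cat last_rcons /=.
split=> [[-> /andP[pA /andP[ax pB]] l]|[[-> /andP[pA ax] _] [_ pB l]]].
  by split; split; rewrite ?pA ?ax.
by split; rewrite ?pA ?ax ?pB.
Qed.

Lemma is_path_segment (s t x y : V) (A M C : seq V) :
  is_path e s t (A ++ x :: M ++ y :: C) <->
  [/\ is_path e s x (rcons A x), is_path e x y (x :: rcons M y)
    & is_path e y t (y :: C)].
Proof.
rewrite is_path_cat -[x :: M ++ y :: C]/((x :: M) ++ y :: C) is_path_cat.
by split=> [[? []]|[]].
Qed.

Lemma split2_mem (P : seq V) (x y : V) :
  x \in P -> y \in P -> x != y ->
  exists A M C, P = A ++ x :: M ++ y :: C \/ P = A ++ y :: M ++ x :: C.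
Proof.
case/splitPr=> A B; rewrite mem_cat in_cons eq_sym.
case/orP=> [/splitPr[A1 A2]|/orP[/eqP->|/splitPr[B1 B2]]]; last 2 first.
- by rewrite eqxx.
- by exists A, B1, B2; left.
by exists A1, A2, B; right; rewrite -catA.
Qed.

Lemma acyclic_path_antisym (a b : V) (M N : seq V) : acyclic e ->
  path e a (rcons M b) -> path e b (rcons N a) -> False.
Proof.
move=> ac pab pba; have := ac a (rcons M b ++ rcons N a).
rewrite cat_path pab last_rcons pba mem_cat !mem_rcons !in_cons eqxx orbT.
by move/(_ isT).
Qed.

Lemma acyclic_common_order (s1 t1 s2 t2 x y : V) (P1 P2 : seq V) :
  acyclic e -> is_path e s1 t1 P1 -> is_path e s2 t2 P2 ->
  x \in P1 -> x \in P2 -> y \in P1 -> y \in P2 -> x != y ->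
  exists A1 M1 C1 A2 M2 C2,
    P1 = A1 ++ x :: M1 ++ y :: C1 /\ P2 = A2 ++ x :: M2 ++ y :: C2 \/
    P1 = A1 ++ y :: M1 ++ x :: C1 /\ P2 = A2 ++ y :: M2 ++ x :: C2.
Proof.
move=> ac iP1 iP2 xP1 xP2 yP1 yP2 nxy.
have [A1 [M1 [C1 E1]]] := split2_mem xP1 yP1 nxy.
have [A2 [M2 [C2 E2]]] := split2_mem xP2 yP2 nxy.
exists A1, M1, C1, A2, M2, C2.
have segment_path s t a b A M C : is_path e s t (A ++ a :: M ++ b :: C) ->
    path e a (rcons M b).
  by case/is_path_segment=> _ [].
case: E1 E2 iP1 iP2 => -> [] -> /segment_path p1 /segment_path p2;
  try by [left | right].
- by case: (acyclic_path_antisym ac p1 p2).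
- by case: (acyclic_path_antisym ac p2 p1).
Qed.

Lemma clos_rt_path_edges (r : relation V) (x : V) (q : seq V) :
  (forall u v, (u, v) \in path_edges (x :: q) -> r u v) ->
  clos_refl_trans V r x (last x q).
Proof.
elim: q x => [|b q IH] x r_edges /=; first exact: rt_refl.
apply: rt_trans (rt_step _ _ _ _ (r_edges x b _)) (IH b _).
  by rewrite /path_edges /= in_cons eqxx.
by move=> u v uv; apply: r_edges; rewrite /path_edges /= in_cons uv orbT.
Qed.

End PathSegments.

Lemma clos_rt_sym (T : Type) (r : relation T) :
  (forall u v, r u v -> r v u) ->
  forall x y, clos_refl_trans T r x y -> clos_refl_trans T r y x.
Proof.
move=> r_sym x y; elim=> [a b /r_sym|a|a b c _ ba _ cb].
- exact: rt_step.
- exact: rt_refl.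
- exact: rt_trans cb ba.
Qed.

Section ShortestPaths.
Variables (R : realDomainType) (V : finType) (e : rel V) (w : V -> V -> R).

Lemma shortest_path_segment_le (s t x y : V) (A M C N : seq V) :
  shortest_path e w s t (A ++ x :: M ++ y :: C) ->
  is_path e x y (x :: rcons N y) ->
  path_weight w (x :: rcons M y) <= path_weight w (x :: rcons N y).
Proof.
case=> /is_path_segment[iA _ iC] shortest iN.
have iP' : is_path e s t (A ++ x :: N ++ y :: C) by apply/is_path_segment.
by have := shortest _ iP'; rewrite !path_weight_segment lerD2r lerD2l.
Qed.

Lemma shortest_path_splice (s t x y : V) (A M C N : seq V) :
  shortest_path e w s t (A ++ x :: M ++ y :: C) ->
  is_path e x y (x :: rcons N y) ->
  path_weight w (x :: rcons N y) <= path_weight w (x :: rcons M y) ->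
  shortest_path e w s t (A ++ x :: N ++ y :: C).
Proof.
case=> /is_path_segment[iA _ iC] shortest iN le_NM; split.
  exact/is_path_segment.
move=> Q iQ; apply: le_trans (shortest Q iQ).
by rewrite !path_weight_segment lerD2r lerD2l.
Qed.

Lemma on_shortest_segment (s t x y u v : V) (A M C : seq V) :
  shortest_path e w s t (A ++ x :: M ++ y :: C) ->
  (u, v) \in path_edges (x :: rcons M y) -> on_shortest e w s t u v.
Proof.
move=> sP uv; exists (A ++ x :: M ++ y :: C).
by rewrite path_edges_segment !mem_cat uv orbT.
Qed.

Lemma Ecap_undir_sym (s1 t1 s2 t2 u v : V) :
  Ecap_undir e w s1 t1 s2 t2 u v -> Ecap_undir e w s1 t1 s2 t2 v u.
Proof. by case=> ?; [right|left]. Qed.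

Lemma common_segment_connected (s1 t1 s2 t2 x y : V) (A1 M1 C1 A2 M2 C2 : seq V) :
  shortest_path e w s1 t1 (A1 ++ x :: M1 ++ y :: C1) ->
  shortest_path e w s2 t2 (A2 ++ x :: M2 ++ y :: C2) ->
  clos_refl_trans V (Ecap_undir e w s1 t1 s2 t2) x y.
Proof.
move=> sP1 sP2.
have [[/is_path_segment[_ iM1 _] _] [/is_path_segment[_ iM2 _] _]] := (sP1, sP2).
have sP2' := shortest_path_splice sP2 iM1 (shortest_path_segment_le sP1 iM2).
rewrite -[y](last_rcons x M1); apply: clos_rt_path_edges => u v uv; left.
by split; [apply: on_shortest_segment sP1 uv | apply: on_shortest_segment sP2' uv].
Qed.

Lemma common_vertices_connected (s1 t1 s2 t2 x y : V) (P1 P2 : seq V) :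
  acyclic e -> shortest_path e w s1 t1 P1 -> shortest_path e w s2 t2 P2 ->
  x \in P1 -> x \in P2 -> y \in P1 -> y \in P2 ->
  clos_refl_trans V (Ecap_undir e w s1 t1 s2 t2) x y.
Proof.
move=> ac sP1 sP2 xP1 xP2 yP1 yP2.
have [<-|nxy] := eqVneq x y; first exact: rt_refl.
have [A1 [M1 [C1 [A2 [M2 [C2 [[E1 E2]|[E1 E2]]]]]]]] :=
  acyclic_common_order ac (proj1 sP1) (proj1 sP2) xP1 xP2 yP1 yP2 nxy;
  rewrite E1 in sP1; rewrite E2 in sP2.
  exact: common_segment_connected sP1 sP2.
exact: clos_rt_sym (@Ecap_undir_sym _ _ _ _) _ _ (common_segment_connected sP1 sP2).
Qed.

End ShortestPaths.

Theorem lemma18 (R : realDomainType) (V : finType) (e : rel V)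
  (w : V -> V -> R) (s1 t1 s2 t2 : V) (P1 P2 : seq V) :
  acyclic e ->
  shortest_path e w s1 t1 P1 ->
  shortest_path e w s2 t2 P2 ->
  (exists x, x \in P1 /\ x \in P2) ->
  exists B : {set V}, is_component e w s1 t1 s2 t2 B /\
    (forall x, x \in P1 -> x \in P2 -> x \in B).
Proof.
move=> ac sP1 sP2 [x0 [x0P1 x0P2]].
exists [set u | `[< clos_refl_trans V (Ecap_undir e w s1 t1 s2 t2) x0 u >]]; split.
  by exists x0 => u; rewrite inE; split=> /asboolP.
move=> x xP1 xP2; rewrite inE; apply/asboolP.
exact: common_vertices_connected sP1 sP2 x0P1 x0P2 xP1 xP2.
Qed.
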